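(* Let $(E,\le,\mathrm{Con})$ be a prime event structure and $\mathcal A$ its family of configurations. If $(R,\le_R),\rho$ is an extremal realisation of $\mathcal A$, then $\rho:R\to E$ is injective, its image $\rho R$ is a configuration of $E$, and for all $r,r'\in R$, $r\le_R r'$ iff $\rho(r)\le\rho(r')$.
   Context: A (prime) event structure $(E,\le,\mathrm{Con})$: set $E$, partial order $\le$ with $\{e'\mid e'\le e\}$ finite for all $e$, a nonempty family $\mathrm{Con}$ of finite subsets closed under subsets, containing all singletons, and such that $X\in\mathrm{Con}$ and $e\le e'\in X$ imply $X\cup\{e\}\in\mathrm{Con}$. A configuration is a (possibly infinite) down-closed subset all of whose finite subsets are in $\mathrm{Con}$. A (causal) realisation of a family $\mathcal A$ with $A=\bigcup\mathcal A$ is a partial order $(R,\le_R)$ with finite down-sets and a function $\rho:R\to A$ such that $\rho x\in\mathcal A$ for every down-closed $x\subseteq R$. A map of realisations is a partial surjective function between carriers which sends down-closed subsets to down-closed subsets and commutes with the functions to $A$ where defined; it is total if the function is total. A realisation is extremal if every total map of realisations out of it is an isomorphism of realisations. *)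

From Stdlib Require Import List.
Set Implicit Arguments.

Definition finite_set {X : Type} (S : X -> Prop) : Prop :=
  exists l : list X, forall x, S x -> In x l.

Definition subset {X : Type} (S T : X -> Prop) : Prop := forall x, S x -> T x.

Definition finitary_partial_order {X : Type} (le : X -> X -> Prop) : Prop :=
  (forall x, le x x) /\
  (forall x y, le x y -> le y x -> x = y) /\
  (forall x y z, le x y -> le y z -> le x z) /\
  (forall x, finite_set (fun y => le y x)).

Definition event_structure {E : Type} (le : E -> E -> Prop)
    (Con : (E -> Prop) -> Prop) : Prop :=
  finitary_partial_order le /\
  (forall X, Con X -> finite_set X) /\
  (exists X, Con X) /\
  (forall X Y, Con X -> subset Y X -> Con Y) /\
  (forall e, Con (fun e' => e' = e)) /\
  (forall X e e', Con X -> X e' -> le e e' -> Con (fun a => X a \/ a = e)).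

Definition down_closed {X : Type} (le : X -> X -> Prop) (S : X -> Prop) : Prop :=
  forall x y, S y -> le x y -> S x.

Definition configuration {E : Type} (le : E -> E -> Prop)
    (Con : (E -> Prop) -> Prop) (x : E -> Prop) : Prop :=
  down_closed le x /\
  (forall Y, subset Y x -> finite_set Y -> Con Y).

Definition image {R A : Type} (rho : R -> A) (x : R -> Prop) : A -> Prop :=
  fun a => exists r, x r /\ rho r = a.

Definition realisation {A : Type} (F : (A -> Prop) -> Prop)
    {R : Type} (leR : R -> R -> Prop) (rho : R -> A) : Prop :=
  finitary_partial_order leR /\
  (forall x : R -> Prop, down_closed leR x -> F (image rho x)).

Definition pimage {R1 R2 : Type} (f : R1 -> option R2) (x : R1 -> Prop) : R2 -> Prop :=
  fun r2 => exists r1, x r1 /\ f r1 = Some r2.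

Definition realisation_map {A R1 R2 : Type}
    (le1 : R1 -> R1 -> Prop) (rho1 : R1 -> A)
    (le2 : R2 -> R2 -> Prop) (rho2 : R2 -> A)
    (f : R1 -> option R2) : Prop :=
  (forall r2, exists r1, f r1 = Some r2) /\
  (forall x, down_closed le1 x -> down_closed le2 (pimage f x)) /\
  (forall r1 r2, f r1 = Some r2 -> rho2 r2 = rho1 r1).

Definition total_pfun {R1 R2 : Type} (f : R1 -> option R2) : Prop :=
  forall r1, exists r2, f r1 = Some r2.

Definition realisation_iso {A R1 R2 : Type}
    (le1 : R1 -> R1 -> Prop) (rho1 : R1 -> A)
    (le2 : R2 -> R2 -> Prop) (rho2 : R2 -> A)
    (f : R1 -> option R2) : Prop :=
  realisation_map le1 rho1 le2 rho2 f /\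
  exists g : R2 -> option R1,
    realisation_map le2 rho2 le1 rho1 g /\
    total_pfun f /\ total_pfun g /\
    (forall r1 r2, f r1 = Some r2 <-> g r2 = Some r1).

Definition extremal {A : Type} (F : (A -> Prop) -> Prop)
    {R : Type} (leR : R -> R -> Prop) (rho : R -> A) : Prop :=
  realisation F leR rho /\
  forall (R' : Type) (leR' : R' -> R' -> Prop) (rho' : R' -> A)
         (f : R -> option R'),
    realisation F leR' rho' ->
    realisation_map leR rho leR' rho' f ->
    total_pfun f ->
    realisation_iso leR rho leR' rho' f.

From Stdlib Require Import List.
From Stdlib Require Import ClassicalEpsilon ProofIrrelevance.

(* The range of rho, ordered by the causal order of E, is a configuration and
   hence itself a realisation, and rho corestricts to a total map of
   realisations onto it.  Extremality makes this corestriction an isomorphism: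
   so rho is injective, and rho r <= rho r' whenever r <= r' because the
   inverse map sends down-sets to down-sets.  Conversely, if rho r <= rho r'
   then rho r lies in the image of the down-set of r', a configuration, and
   injectivity puts r in that down-set. *)

Definition range {R A : Type} (rho : R -> A) : A -> Prop :=
  fun a => exists r, rho r = a.

Definition corestrict {R A : Type} (rho : R -> A) (r : R) : sig (range rho) :=
  exist _ (rho r) (ex_intro _ r eq_refl).

Definition restrict_le {A : Type} (le : A -> A -> Prop) (P : A -> Prop) :
    sig P -> sig P -> Prop :=
  fun p q => le (proj1_sig p) (proj1_sig q).

Lemma finite_set_sig {A : Type} (P : A -> Prop) {S : A -> Prop} :
  finite_set S -> finite_set (fun p : sig P => S (proj1_sig p)).
Proof.
  intros [l Hl].
  exists (flat_map (fun a => match excluded_middle_informative (P a) with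
                             | left h => exist P a h :: nil
                             | right _ => nil
                             end) l).
  intros [a h] Ha. apply in_flat_map. exists a. split; [exact (Hl a Ha)|].
  destruct (excluded_middle_informative (P a)) as [h'|n]; [|contradiction].
  left. apply subset_eq_compat. reflexivity.
Qed.

Lemma finitary_partial_order_restrict {A : Type} {le : A -> A -> Prop} (P : A -> Prop) :
  finitary_partial_order le -> finitary_partial_order (restrict_le le P).
Proof.
  intros [Hrefl [Hanti [Htrans Hfin]]]. unfold restrict_le.
  split; [|split; [|split]].
  - intros p. apply Hrefl.
  - intros [a ha] [b hb] Hab Hba. apply subset_eq_compat. exact (Hanti a b Hab Hba).
  - intros p q s. apply Htrans.
  - intros p. exact (finite_set_sig P (Hfin (proj1_sig p))).
Qed.

Lemma configuration_realisation {E : Type} {le : E -> E -> Prop}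
    (Con : (E -> Prop) -> Prop) {P : E -> Prop} :
  finitary_partial_order le -> configuration le Con P ->
  realisation (configuration le Con) (restrict_le le P) (@proj1_sig E P).
Proof.
  intros Hpo [HPdown HPcon].
  split; [exact (finitary_partial_order_restrict P Hpo)|].
  intros x Hx. split.
  - intros e e' [p [Hp <-]] Hle.
    set (q := exist P e (HPdown e (proj1_sig p) (proj2_sig p) Hle)).
    exists q. split; [exact (Hx q p Hp Hle)|reflexivity].
  - intros Y HY HfinY. apply HPcon; [|exact HfinY].
    intros e He. destruct (HY e He) as [p [_ <-]]. exact (proj2_sig p).
Qed.

Lemma realisation_range_configuration {E R : Type} {le : E -> E -> Prop}
    {Con : (E -> Prop) -> Prop} {leR : R -> R -> Prop} {rho : R -> E} :
  realisation (configuration le Con) leR rho -> configuration le Con (range rho).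
Proof.
  intros [_ Himg].
  destruct (Himg (fun _ => True)) as [Hdown Hcon]; [intros r r' _ _; exact I|].
  split.
  - intros e e' [r' <-] Hle.
    destruct (Hdown e (rho r') (ex_intro _ r' (conj I eq_refl)) Hle) as [r [_ Hr]].
    exists r. exact Hr.
  - intros Y HY HfinY. apply Hcon; [|exact HfinY].
    intros e He. destruct (HY e He) as [r Hr]. exists r. split; [exact I|exact Hr].
Qed.

Lemma corestrict_realisation_map {E R : Type} {le : E -> E -> Prop}
    {Con : (E -> Prop) -> Prop} {leR : R -> R -> Prop} {rho : R -> E} :
  realisation (configuration le Con) leR rho ->
  realisation_map leR rho (restrict_le le (range rho)) (@proj1_sig E (range rho))
    (fun r => Some (corestrict rho r)).
Proof.
  intros [_ Himg]. split; [|split].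
  - intros [e [r <-]]. exists r. reflexivity.
  - intros x Hx p q [r [Hr Hq]] Hpq. injection Hq as <-.
    destruct (proj1 (Himg x Hx) (proj1_sig p) (rho r) (ex_intro _ r (conj Hr eq_refl)) Hpq)
      as [r' [Hr' Hr'p]].
    exists r'. split; [exact Hr'|].
    f_equal. destruct p as [e he]. apply subset_eq_compat. exact Hr'p.
  - intros r p Hp. injection Hp as <-. reflexivity.
Qed.

Lemma realisation_iso_injective {A R1 R2 : Type}
    {le1 : R1 -> R1 -> Prop} {rho1 : R1 -> A}
    {le2 : R2 -> R2 -> Prop} {rho2 : R2 -> A} {f : R1 -> option R2} :
  realisation_iso le1 rho1 le2 rho2 f ->
  forall r r' s, f r = Some s -> f r' = Some s -> r = r'.
Proof.
  intros [_ [g [_ [_ [_ Hfg]]]]] r r' s Hr Hr'.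
  apply Hfg in Hr. apply Hfg in Hr'. congruence.
Qed.

Lemma realisation_iso_monotone {A R1 R2 : Type}
    {le1 : R1 -> R1 -> Prop} {rho1 : R1 -> A}
    {le2 : R2 -> R2 -> Prop} {rho2 : R2 -> A} {f : R1 -> option R2} :
  finitary_partial_order le2 -> realisation_iso le1 rho1 le2 rho2 f ->
  forall r r' s s', f r = Some s -> f r' = Some s' -> le1 r r' -> le2 s s'.
Proof.
  intros [Hrefl [_ [Htrans _]]] [_ [g [[_ [Hgdown _]] [_ [_ Hfg]]]]] r r' s s' Hr Hr' Hle.
  set (below := fun t => le2 t s').
  assert (Hbelow : down_closed le2 below) by (intros t t' Ht' Htt'; exact (Htrans _ _ _ Htt' Ht')).
  assert (Hr'_in : pimage g below r') by (exists s'; split; [apply Hrefl|apply Hfg; exact Hr']).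
  destruct (Hgdown below Hbelow r r' Hr'_in Hle) as [t [Ht Hgt]].
  apply Hfg in Hgt. rewrite Hr in Hgt. injection Hgt as <-. exact Ht.
Qed.

Lemma realisation_injective_reflects_le {E R : Type} {le : E -> E -> Prop}
    {Con : (E -> Prop) -> Prop} {leR : R -> R -> Prop} {rho : R -> E} :
  realisation (configuration le Con) leR rho ->
  (forall r r', rho r = rho r' -> r = r') ->
  forall r r', le (rho r) (rho r') -> leR r r'.
Proof.
  intros [[Hrefl [_ [Htrans _]]] Himg] Hinj r r' Hle.
  set (below := fun t => leR t r').
  assert (Hbelow : down_closed leR below) by (intros t t' Ht' Htt'; exact (Htrans _ _ _ Htt' Ht')).
  assert (Hr'_in : image rho below (rho r')) by (exists r'; split; [apply Hrefl|reflexivity]).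
  destruct (proj1 (Himg below Hbelow) (rho r) (rho r') Hr'_in Hle) as [t [Ht Hrt]].
  rewrite (Hinj r t (eq_sym Hrt)). exact Ht.
Qed.

Theorem mainTheorem5 (E : Type) (le : E -> E -> Prop) (Con : (E -> Prop) -> Prop)
  (R : Type) (leR : R -> R -> Prop) (rho : R -> E) :
  event_structure le Con ->
  extremal (configuration le Con) leR rho ->
  (forall r r', rho r = rho r' -> r = r') /\
  configuration le Con (fun e => exists r, rho r = e) /\
  (forall r r', leR r r' <-> le (rho r) (rho r')).
Proof.
  intros [Hpo _] [Hreal Hext].
  pose proof (realisation_range_configuration Hreal) as Hrange.
  pose proof (configuration_realisation Con Hpo Hrange) as Hreal'.
  assert (Htotal : total_pfun (fun r => Some (corestrict rho r))) by (intros r; eexists; reflexivity).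
  pose proof (Hext _ _ _ _ Hreal' (corestrict_realisation_map Hreal) Htotal) as Hiso.
  assert (Hinj : forall r r', rho r = rho r' -> r = r').
  { intros r r' Hrr'.
    apply (realisation_iso_injective Hiso r r' (corestrict rho r) eq_refl).
    f_equal. apply subset_eq_compat. symmetry. exact Hrr'. }
  split; [exact Hinj|split; [exact Hrange|]].
  intros r r'. split.
  - exact (realisation_iso_monotone (finitary_partial_order_restrict _ Hpo) Hiso
             r r' _ _ eq_refl eq_refl).
  - exact (realisation_injective_reflects_le Hreal Hinj r r').
Qed.
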